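(* Let $\mathcal{H}$ be a $[3]$-graph, let $\mathcal{C}=v_1,e_1,\dots,v_\ell,e_\ell,v_1$ be a maximal Berge cycle in $\mathcal{H}$, let $u\in V(\mathcal{H})\setminus V(\mathcal{C})$, and let $U_u$ be a usable set for $u$. If $v_i,v_j\in U_u$ are distinct and adjacent, then $E(v_i,v_j)\subseteq\{e_i,e_j\}$.
   Context: A $[3]$-graph is a hypergraph in which every edge has at most $3$ vertices. A Berge cycle $\mathcal{C}=v_1,e_1,\dots,v_\ell,e_\ell,v_1$ consists of distinct edges $e_1,\dots,e_\ell$ and distinct vertices $v_1,\dots,v_\ell$ with $\{v_i,v_{i+1}\}\subseteq e_i$ (indices modulo $\ell$); $V(\mathcal{C})=\{v_1,\dots,v_\ell\}$. A Berge cycle $\mathcal{C}$ is maximal if there is no Berge cycle $\mathcal{C}'$ with $V(\mathcal{C})\subsetneq V(\mathcal{C}')$. For vertices $x,y$, $E(x,y)$ is the set of edges containing both; $x,y$ are adjacent if $E(x,y)\ne\emptyset$. A set $U_u\subseteq V(\mathcal{C})$ is usable for $u\notin V(\mathcal{C})$ if: (1) for every $v_i\in U_u$, $E(u,v_{i-1})\setminus\{e_{i-2}\}\neq\emptyset$; (2) for any distinct $v_i,v_j\in U_u$, $v_i$ and $v_j$ are not consecutive on $\mathcal{C}$; (3) for any distinct $v_i,v_j\in U_u$ there exist edges $e(u,v_{i-1})\in E(u,v_{i-1})\setminus\{e_{i-2}\}$ and $e(u,v_{j-1})\in E(u,v_{j-1})\setminus\{e_{j-2}\}$ with $e(u,v_{i-1})\neq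 e(u,v_{j-1})$. *)

From mathcomp Require Import all_boot.
Set Implicit Arguments. Unset Strict Implicit. Unset Printing Implicit Defensive.

Section Hyper.
Variable V : finType.

Definition three_graph (H : {set {set V}}) : Prop :=
  forall f, f \in H -> #|f| <= 3.

(* Berge cycle v_0,e_0,...,v_{l-1},e_{l-1},v_0 (0-based; indices mod l). *)
Definition berge_cycle (H : {set {set V}}) (l : nat)
    (v : nat -> V) (e : nat -> {set V}) : Prop :=
  [/\ 2 <= l,
      forall i j, i < l -> j < l -> v i = v j -> i = j,
      forall i j, i < l -> j < l -> e i = e j -> i = j,
      forall i, i < l -> e i \in H &
      forall i, i < l -> (v i \in e i) && (v (i.+1 %% l) \in e i)].

Definition cycle_vset (l : nat) (v : nat -> V) : {set V} :=
  [set v (nat_of_ord i) | i : 'I_l].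

Definition maximal_berge_cycle (H : {set {set V}}) (l : nat)
    (v : nat -> V) (e : nat -> {set V}) : Prop :=
  berge_cycle H l v e /\
  forall l' v' e', berge_cycle H l' v' e' ->
    ~ (cycle_vset l v \proper cycle_vset l' v').

Definition EE (H : {set {set V}}) (x y : V) : {set {set V}} :=
  [set f in H | (x \in f) && (y \in f)].

Definition adjacent (H : {set {set V}}) (x y : V) : Prop := EE H x y != set0.

Definition prevI (l i : nat) : nat := (i + l - 1) %% l.
Definition prev2I (l i : nat) : nat := (i + l - 2) %% l.

Definition avail (H : {set {set V}}) (l : nat) (v : nat -> V)
    (e : nat -> {set V}) (u : V) (i : nat) : {set {set V}} :=
  EE H u (v (prevI l i)) :\ e (prev2I l i).

Definition usable (H : {set {set V}}) (l : nat) (v : nat -> V)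
    (e : nat -> {set V}) (u : V) (U : {set V}) : Prop :=
  [/\ U \subset cycle_vset l v,
      forall i, i < l -> v i \in U -> avail H l v e u i != set0,
      (* (2) *)
      forall i j, i < l -> j < l -> i != j -> v i \in U -> v j \in U ->
        j != i.+1 %% l &
      (* (3) *)
      forall i j, i < l -> j < l -> i != j -> v i \in U -> v j \in U ->
        exists f g, [/\ f \in avail H l v e u i, g \in avail H l v e u j & f != g]].

End Hyper.

From mathcomp Require Import all_boot zify.
Set Implicit Arguments. Unset Strict Implicit. Unset Printing Implicit Defensive.

(* Suppose some edge f through v_i and v_j is neither e_i nor e_j. Rotate the
   cycle so that it starts at v_i and let a be the offset of v_j; condition (2)
   gives 2 <= a <= l-2. With f_i, f_j the distinct edges of condition (3),
     u, f_j, v_(j-1), e_(j-2), ..., e_i, v_i, f, v_j, e_j, ..., v_(i-1), f_i, u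
   is a Berge cycle on V(C) + u, contradicting maximality. Its edges are
   distinct because edges have at most three vertices: f = e_t would put
   v_i, v_j, v_t, v_(t+1) in one edge, forcing t to be i or j (excluded by
   assumption) or j-1 or i-1 (edges the new cycle does not use); f_i and f_j
   are handled in the same way through u. *)

(* [cycle_vset n f] is the image of [0, n) under any [f : nat -> T]; it is used
   below for vertex and edge sequences of paths alike. *)
Section InitialSegmentImage.
Variable T : finType.
Implicit Types (f g : nat -> T) (m n : nat).

Definition catf (n1 : nat) (f1 f2 : nat -> T) : nat -> T :=
  fun k => if k < n1 then f1 k else f2 (k - n1).

Lemma cycle_vsetP n f x : reflect (exists2 k, k < n & x = f k) (x \in cycle_vset n f).
Proof.
apply: (iffP imsetP) => [[k _ ->]|[k kn ->]]; first by exists k.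
by exists (Ordinal kn).
Qed.

Lemma cycle_vset0 f : cycle_vset 0 f = set0.
Proof. by apply/setP => x; rewrite inE; apply/cycle_vsetP => -[]. Qed.

Lemma cycle_vset1 f : cycle_vset 1 f = [set f 0].
Proof.
apply/setP => x; rewrite inE.
by apply/cycle_vsetP/eqP => [[[|k] // _ ->]|->]; last by exists 0.
Qed.

Lemma cycle_vset_sub m n f : m <= n -> cycle_vset m f \subset cycle_vset n f.
Proof.
move=> mn; apply/subsetP => x /cycle_vsetP[k km ->].
by apply/cycle_vsetP; exists k => //; apply: leq_trans mn.
Qed.

Lemma cycle_vset_rev n f : cycle_vset n (fun k => f (n.-1 - k)) = cycle_vset n f.
Proof.
apply/setP => x; apply/cycle_vsetP/cycle_vsetP => -[k kn ->];
  by exists (n.-1 - k); [lia | congr f; lia].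
Qed.

Lemma cycle_vset_split m n f : m <= n ->
  cycle_vset n f = cycle_vset m f :|: cycle_vset (n - m) (fun k => f (m + k)).
Proof.
move=> mn; apply/setP => x; rewrite inE.
apply/cycle_vsetP/orP => [[k kn ->]|[]/cycle_vsetP[k kb ->]].
- case: (ltnP k m) => km; [left | right]; apply/cycle_vsetP; first by exists k.
  by exists (k - m); [lia | congr f; lia].
- by exists k => //; lia.
- by exists (m + k) => //; lia.
Qed.

Lemma cycle_vset_split_disjoint m n f :
  (forall x y, x < n -> y < n -> f x = f y -> x = y) ->
  [disjoint cycle_vset m f & cycle_vset (n - m) (fun k => f (m + k))].
Proof.
move=> finj; rewrite -setI_eq0; apply/eqP/setP => x; rewrite !inE.
apply/negP => /andP[/cycle_vsetP[k km ->] /cycle_vsetP[k' kn /finj]]; lia.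
Qed.

Lemma eq_cycle_vset n f g : (forall k, k < n -> f k = g k) ->
  cycle_vset n f = cycle_vset n g.
Proof.
by move=> fg; apply/setP => x; apply/cycle_vsetP/cycle_vsetP => -[k kn ->];
  exists k; rewrite ?fg.
Qed.

Lemma cycle_vset_cat (n1 n2 : nat) (f1 f2 : nat -> T) :
  cycle_vset (n1 + n2) (catf n1 f1 f2) = cycle_vset n1 f1 :|: cycle_vset n2 f2.
Proof.
rewrite (cycle_vset_split _ (leq_addr n2 n1)) addKn /catf.
by congr (_ :|: _); apply: eq_cycle_vset => k kn;
  rewrite ?kn // ltnNge leq_addr addKn.
Qed.

Lemma catf_inj (n1 n2 : nat) (f1 f2 : nat -> T) :
  (forall x y, x < n1 -> y < n1 -> f1 x = f1 y -> x = y) ->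
  (forall x y, x < n2 -> y < n2 -> f2 x = f2 y -> x = y) ->
  [disjoint cycle_vset n1 f1 & cycle_vset n2 f2] ->
  forall x y, x < n1 + n2 -> y < n1 + n2 -> catf n1 f1 f2 x = catf n1 f1 f2 y -> x = y.
Proof.
move=> inj1 inj2 dis.
have apart k k' : k < n1 -> k' < n2 -> f1 k <> f2 k'.
  move=> kn kn' E; have A : f1 k \in cycle_vset n1 f1 by apply/cycle_vsetP; exists k.
  have B : f1 k \in cycle_vset n2 f2 by apply/cycle_vsetP; exists k'.
  by rewrite (disjointFr dis A) in B.
move=> x y xn yn; rewrite /catf.
case: ltnP => xn1; case: ltnP => yn1; first exact: inj1.
- by move/apart; case; lia.
- by move/esym/apart; case; lia.
- by move/inj2 => E; have := E ltac:(lia) ltac:(lia); lia.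
Qed.

Lemma cycle_vset_rot n i f : i < n ->
  cycle_vset n (fun k => f ((k + i) %% n)) = cycle_vset n f.
Proof.
move=> i_n; apply/setP => x; apply/cycle_vsetP/cycle_vsetP => -[k kn ->].
  by exists ((k + i) %% n); rewrite // ltn_pmod //; lia.
exists ((k + n - i) %% n); first by rewrite ltn_pmod //; lia.
by rewrite modnDml (_ : k + n - i + i = k + n) ?modnDr ?modn_small //; lia.
Qed.

End InitialSegmentImage.

Section BergePath.
Variables (V : finType) (H : {set {set V}}).

Definition berge_path (n : nat) (w : nat -> V) (p : nat -> {set V}) : Prop :=
  [/\ forall x y, x < n -> y < n -> w x = w y -> x = y,
      forall x y, x < n.-1 -> y < n.-1 -> p x = p y -> x = y,
      forall k, k < n.-1 -> p k \in H &
      forall k, k.+1 < n -> (w k \in p k) && (w k.+1 \in p k)].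

Definition path_edges (n : nat) (p : nat -> {set V}) := cycle_vset n.-1 p.

Lemma berge_path1 u p : berge_path 1 (fun _ => u) p.
Proof. by split=> [[|x] [|y]|||]. Qed.

Lemma berge_path_take m n w p : m <= n -> berge_path n w p -> berge_path m w p.
Proof.
move=> mn [winj pinj pH wp]; split=> [x y xm ym|x y xm ym|k km|k km].
- by apply: winj; lia.
- by apply: pinj; lia.
- by apply: pH; lia.
- by apply: wp; lia.
Qed.

Lemma berge_path_drop m n w p : berge_path n w p ->
  berge_path (n - m) (fun k => w (m + k)) (fun k => p (m + k)).
Proof.
move=> [winj pinj pH wp]; split=> [x y xn yn /winj|x y xn yn /pinj|k kn|k kn].
- by move=> E; have := E ltac:(lia) ltac:(lia); lia.
- by move=> E; have := E ltac:(lia) ltac:(lia); lia.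
- by apply: pH; lia.
- by rewrite addnS; apply: wp; lia.
Qed.

Lemma berge_path_rev n w p : berge_path n w p ->
  berge_path n (fun k => w (n.-1 - k)) (fun k => p (n.-2 - k)).
Proof.
move=> [winj pinj pH wp]; split=> [x y xn yn /winj|x y xn yn /pinj|k kn|k kn].
- by move=> E; have := E ltac:(lia) ltac:(lia); lia.
- by move=> E; have := E ltac:(lia) ltac:(lia); lia.
- by apply: pH; lia.
- have /andP[w1 w2] := wp (n.-2 - k) ltac:(lia).
  have -> : n.-1 - k = (n.-2 - k).+1 by lia.
  have -> : n.-1 - k.+1 = n.-2 - k by lia.
  by rewrite w1 w2.
Qed.

Lemma path_edges_rev n p : path_edges n (fun k => p (n.-2 - k)) = path_edges n p.
Proof. exact: cycle_vset_rev. Qed.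

Definition cat_edges (n1 : nat) (p1 : nat -> {set V}) (h : {set V}) p2 :=
  catf n1.-1 p1 (catf 1 (fun _ => h) p2).

Lemma path_edges_cat n1 n2 p1 h p2 : 0 < n1 -> 0 < n2 ->
  path_edges (n1 + n2) (cat_edges n1 p1 h p2) =
  path_edges n1 p1 :|: (h |: path_edges n2 p2).
Proof.
move=> n1_gt0 n2_gt0; rewrite /path_edges.
rewrite (_ : (n1 + n2).-1 = n1.-1 + (1 + n2.-1)); last by lia.
by rewrite !cycle_vset_cat cycle_vset1.
Qed.

Lemma berge_path_cat n1 n2 w1 w2 p1 p2 h : 0 < n1 -> 0 < n2 ->
  berge_path n1 w1 p1 -> berge_path n2 w2 p2 ->
  [disjoint cycle_vset n1 w1 & cycle_vset n2 w2] ->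
  [disjoint path_edges n1 p1 & path_edges n2 p2] ->
  h \in H -> w1 n1.-1 \in h -> w2 0 \in h ->
  h \notin path_edges n1 p1 :|: path_edges n2 p2 ->
  berge_path (n1 + n2) (catf n1 w1 w2) (cat_edges n1 p1 h p2).
Proof.
move=> n1_gt0 n2_gt0 [winj1 pinj1 pH1 wp1] [winj2 pinj2 pH2 wp2] wdis pdis hH wh1 wh2.
rewrite inE negb_or => /andP[hp1 hp2].
split=> [|x y xn yn|k kn|k kn]; first exact: catf_inj.
- have hinj : forall x y, x < 1 -> y < 1 -> h = h -> x = y by case=> [|?] [|?].
  have := catf_inj hinj pinj2; rewrite cycle_vset1 disjoints1 => /(_ hp2) pinj.
  move: x y xn yn; rewrite (_ : (n1 + n2).-1 = n1.-1 + (1 + n2.-1)); last by lia.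
  apply: catf_inj => //.
  rewrite cycle_vset_cat cycle_vset1 -setI_eq0 setIUr setU_eq0 !setI_eq0.
  by rewrite disjoint_sym disjoints1 hp1.
- rewrite /cat_edges /catf; case: ltnP => [/pH1 //|k1]; case: ltnP => // k2.
  by apply: pH2; lia.
- rewrite /cat_edges /catf; case: (ltnP k.+1 n1) => kn1.
    have k1 : k < n1.-1 by lia.
    by rewrite (ltnW kn1) k1; apply: wp1.
  case: (ltnP k n1) => kn1'.
    have -> : k = n1.-1 by lia.
    by rewrite ltnn subnn /= (_ : n1.-1.+1 - n1 = 0) ?wh1 ?wh2 //; lia.
  have [k1 k2] : n1.-1 <= k /\ 0 < k - n1.-1 by lia.
  rewrite ltnNge k1 ltnNge k2 /= (_ : k - n1.-1 - 1 = k - n1) ?subSn //; last by lia.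
  by apply: wp2; lia.
Qed.

Lemma berge_path_close n w p h : 1 < n -> berge_path n w p ->
  h \in H -> w n.-1 \in h -> w 0 \in h -> h \notin path_edges n p ->
  berge_cycle H n w (catf n.-1 p (fun _ => h)).
Proof.
move=> n_gt1 [winj pinj pH wp] hH wh1 wh2 hp; split=> // [x y xn yn|k kn|k kn].
- have hinj : forall x y, x < 1 -> y < 1 -> h = h -> x = y by case=> [|?] [|?].
  have := catf_inj pinj hinj; rewrite cycle_vset1 disjoint_sym disjoints1.
  rewrite addn1 prednK; last by lia.
  by move/(_ hp); apply.
- by rewrite /catf; case: ltnP => [/pH|_].
- rewrite /catf; case: ltnP => kn1.
    by rewrite modn_small //; [apply: wp | ]; lia.
  have -> : k = n.-1 by lia.
  by rewrite prednK ?modnn ?wh1 ?wh2 //; lia.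
Qed.

Lemma berge_cycle_rot l i v e : berge_cycle H l v e ->
  berge_path l (fun k => v ((k + i) %% l)) (fun k => e ((k + i) %% l)).
Proof.
move=> [l_gt1 vinj einj eH ve]; have l_gt0 : 0 < l by lia.
have modDr_inj x y : x < l -> y < l -> (x + i) %% l = (y + i) %% l -> x = y.
  by move=> xl yl /eqP; rewrite eqn_modDr !modn_small // => /eqP.
split=> [x y xl yl /vinj|x y xl yl /einj|k kl|k kl].
- by move=> E; apply: modDr_inj => //; apply: E; rewrite ltn_pmod.
- by move=> E; apply: modDr_inj; [lia | lia | apply: E; rewrite ltn_pmod].
- by apply: eH; rewrite ltn_pmod.
- have := ve _ (ltn_pmod (k + i) l_gt0).
  by rewrite -addn1 modnDml addn1 addSn.
Qed.

Lemma three_graph_uniq_size f (s : seq V) : three_graph H -> f \in H ->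
  uniq s -> {subset s <= f} -> size s <= 3.
Proof.
move=> H3 fH s_uniq sf; apply: leq_trans (H3 f fH).
by rewrite cardE; apply: uniq_leq_size => // x /sf; rewrite mem_enum.
Qed.

Lemma berge_path_edge_neq n w p t f x y : three_graph H -> berge_path n w p ->
  t.+1 < n -> f \in H -> x \in f -> y \in f -> uniq [:: x; y; w t; w t.+1] ->
  f != p t.
Proof.
move=> H3 [_ _ _ wp] tn fH xf yf xy_uniq; apply/eqP => fp.
have /andP[wt wt1] := wp t tn; rewrite -fp in wt wt1.
suff : size [:: x; y; w t; w t.+1] <= 3 by [].
apply: three_graph_uniq_size H3 fH xy_uniq _ => z.
by rewrite !inE => /or4P[] /eqP ->.
Qed.

End BergePath.

(* [lia] also processes the set-valued hypotheses, whose [.-1] indices make it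
   explode; drop them first. *)
Ltac index_lia :=
  repeat match goal with
  | h : is_true (~~ (?x == _)) |- _ =>
      lazymatch type of x with nat => fail | _ => clear h end
  | h : is_true (_ \in _) |- _ => clear h
  | h : is_true (_ \notin _) |- _ => clear h
  end; lia.

Section Switching.
Variables (V : finType) (H : {set {set V}}) (l a : nat).
Variables (w : nat -> V) (p : nat -> {set V}) (u : V) (fi fj f : {set V}).
Hypotheses (H3 : three_graph H) (P : berge_path H l w p).
Hypotheses (uP : u \notin cycle_vset l w) (a_gt1 : 1 < a) (a_lt : a < l.-1).
Hypotheses (fiH : fi \in H) (u_fi : u \in fi) (w_fi : w l.-1 \in fi) (fi_p : fi != p l.-2).
Hypotheses (fjH : fj \in H) (u_fj : u \in fj) (w_fj : w a.-1 \in fj) (fj_p : fj != p a.-2).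
Hypotheses (fH : f \in H) (w0_f : w 0 \in f) (wa_f : w a \in f).
Hypotheses (f_p0 : f != p 0) (f_pa : f != p a) (fi_fj : fi != fj).

Lemma uniq_cons_map_path ks : all (fun k => k < l) ks -> uniq ks ->
  uniq (u :: map w ks).
Proof.
case: P => winj _ _ _ ksl ks_uniq.
rewrite /= map_inj_in_uniq ?ks_uniq ?andbT; last first.
  by move=> x y /(allP ksl) xl /(allP ksl) yl /winj; apply.
apply: contra uP => /mapP[k /(allP ksl) kl ->].
by apply/cycle_vsetP; exists k.
Qed.

Lemma uniq_map_path ks : all (fun k => k < l) ks -> uniq ks -> uniq (map w ks).
Proof. by move=> ksl /(uniq_cons_map_path ksl) /andP[]. Qed.

(* The path edges reused by the new cycle: all of them except [p a.-1]. *)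
Let kept_edges := cycle_vset a.-1 p :|: path_edges (l - a) (fun k => p (a + k)).

Lemma mem_kept_edges x : x \in kept_edges ->
  exists t, [/\ t < l.-1, t != a.-1 & x = p t].
Proof.
rewrite inE => /orP[] /cycle_vsetP[t tl ->]; first by exists t; split=> //; index_lia.
by exists (a + t); split=> //; index_lia.
Qed.

Lemma fj_notin_kept_edges : fj \notin kept_edges.
Proof.
apply/negP => /mem_kept_edges[t [tl ta /eqP]]; apply/negP.
case: (eqVneq t a.-2) => [->|ta2] //.
apply: berge_path_edge_neq H3 P _ fjH u_fj w_fj _; first index_lia.
by apply: (@uniq_cons_map_path [:: a.-1; t; t.+1]); rewrite /= ?inE; index_lia.
Qed.

Lemma fi_notin_kept_edges : fi \notin kept_edges.
Proof.
apply/negP => /mem_kept_edges[t [tl _ /eqP]]; apply/negP.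
case: (eqVneq t l.-2) => [->|tl2] //.
apply: berge_path_edge_neq H3 P _ fiH u_fi w_fi _; first index_lia.
by apply: (@uniq_cons_map_path [:: l.-1; t; t.+1]); rewrite /= ?inE; index_lia.
Qed.

Lemma f_notin_kept_edges : f \notin kept_edges.
Proof.
apply/negP => /mem_kept_edges[t [tl ta /eqP]]; apply/negP.
case: (eqVneq t 0) => [->|t0] //; case: (eqVneq t a) => [->|tla] //.
apply: berge_path_edge_neq H3 P _ fH w0_f wa_f _; first index_lia.
by apply: (@uniq_map_path [:: 0; a; t; t.+1]); rewrite /= ?inE; index_lia.
Qed.

Lemma f_neq_edge_through_u (g : {set V}) t : u \in g -> w t \in g ->
  t < l -> t != 0 -> t != a -> f != g.
Proof.
move=> ug wg tl t0 ta; apply/eqP => fg.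
have s_uniq : uniq [:: u; w 0; w a; w t].
  by apply: (@uniq_cons_map_path [:: 0; a; t]); rewrite /= ?inE; index_lia.
suff : size [:: u; w 0; w a; w t] <= 3 by [].
apply: three_graph_uniq_size H3 fH s_uniq _ => z.
by rewrite !inE => /or4P[] /eqP ->; rewrite // fg.
Qed.

Let head_vertices := catf 1 (fun _ => u) (fun k => w (a.-1 - k)).
Let head_edges := cat_edges 1 p fj (fun k => p (a.-2 - k)).

Lemma cycle_vset_head : cycle_vset a.+1 head_vertices = u |: cycle_vset a w.
Proof. by rewrite -[a.+1]/(1 + a) cycle_vset_cat cycle_vset1 cycle_vset_rev. Qed.

Lemma path_edges_head : path_edges a.+1 head_edges = fj |: cycle_vset a.-1 p.
Proof.
rewrite -[a.+1]/(1 + a) path_edges_cat ?path_edges_rev; try index_lia.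
by rewrite /path_edges cycle_vset0 set0U.
Qed.

Lemma berge_path_head : berge_path H a.+1 head_vertices head_edges.
Proof.
have al : a <= l by index_lia.
apply: (berge_path_cat (n1 := 1)) => //; first (by index_lia); first exact: berge_path1.
- exact/berge_path_rev/(berge_path_take al).
- rewrite cycle_vset1 cycle_vset_rev disjoints1; apply: contra uP.
  exact/subsetP/cycle_vset_sub.
- by rewrite /path_edges cycle_vset0 -setI_eq0 set0I.
- by rewrite subn0.
- rewrite path_edges_rev /path_edges cycle_vset0 set0U.
  by apply: contra fj_notin_kept_edges; rewrite inE => ->.
Qed.

Let tail_vertices := fun k => w (a + k).
Let tail_edges := fun k => p (a + k).
Let loop_vertices := catf a.+1 head_vertices tail_vertices.
Let loop_edges := cat_edges a.+1 head_edges f tail_edges.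

Let loop_length : l.+1 = a.+1 + (l - a).
Proof. index_lia. Qed.

Lemma berge_path_loop : berge_path H l.+1 loop_vertices loop_edges.
Proof.
have al : a <= l by index_lia.
case: (P) => winj pinj _ _.
rewrite loop_length; apply: berge_path_cat => //; first (by index_lia).
- exact: berge_path_head.
- exact: berge_path_drop.
- rewrite cycle_vset_head -setI_eq0 setIUl setU_eq0 !setI_eq0.
  rewrite cycle_vset_split_disjoint // disjoints1 andbT; apply: contra uP => /= u_tail.
  by rewrite (cycle_vset_split w al) inE u_tail orbT.
- rewrite path_edges_head -setI_eq0 setIUl setU_eq0 !setI_eq0 disjoints1.
  apply/andP; split.
    by apply: contra fj_notin_kept_edges; rewrite inE orbC => ->.
  apply: (@disjointWl _ _ (cycle_vset a p)); first by apply: cycle_vset_sub; index_lia.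
  rewrite /path_edges (_ : (l - a).-1 = l.-1 - a); last by index_lia.
  by apply: cycle_vset_split_disjoint => x y xl yl; apply: pinj.
- by rewrite /head_vertices /catf ltnNge (ltnW a_gt1) subn1 subnn.
- by rewrite /tail_vertices addn0.
- have fj_f : f != fj by apply: f_neq_edge_through_u u_fj w_fj _ _ _; index_lia.
  rewrite path_edges_head !inE !negb_or fj_f /= -negb_or.
  by move: f_notin_kept_edges; rewrite inE.
Qed.

Theorem berge_cycle_switch : exists w' e',
  berge_cycle H l.+1 w' e' /\ cycle_vset l.+1 w' = u |: cycle_vset l w.
Proof.
exists loop_vertices, (catf l loop_edges (fun _ => fi)); split.
  apply: berge_path_close berge_path_loop _ _ _ _ => //; first by index_lia.
  - have al : a.+1 <= l by index_lia.
    rewrite /loop_vertices /catf /= ltnNge al /tail_vertices.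
    by rewrite (_ : a + (l - a.+1) = l.-1) //; index_lia.
  - have fi_f : f != fi by apply: f_neq_edge_through_u u_fi w_fi _ _ _; index_lia.
    rewrite /path_edges loop_length -/(path_edges _ _) path_edges_cat; try index_lia.
    rewrite path_edges_head !inE !negb_or fi_fj eq_sym fi_f /= -negb_or.
    by move: fi_notin_kept_edges; rewrite inE.
by rewrite loop_length cycle_vset_cat cycle_vset_head -setUA -cycle_vset_split //; index_lia.
Qed.

End Switching.

Lemma modn_wrap_sub l b c : c <= l -> c <= b -> (b %% l + l - c) %% l = (b - c) %% l.
Proof.
move=> cl cb; rewrite (_ : b %% l + l - c = b %% l + (l - c)); last by lia.
by rewrite modnDml (_ : b + (l - c) = b - c + l) ?modnDr //; lia.
Qed.

Lemma prevI_shift l i k : 0 < l -> 0 < k -> prevI l ((k + i) %% l) = (k.-1 + i) %% l.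
Proof. by move=> l_gt0 k_gt0; rewrite /prevI modn_wrap_sub; [congr modn | |]; lia. Qed.

Lemma prev2I_shift l i k : 1 < l -> 1 < k -> prev2I l ((k + i) %% l) = (k.-2 + i) %% l.
Proof. by move=> l_gt1 k_gt1; rewrite /prev2I modn_wrap_sub; [congr modn | |]; lia. Qed.

Lemma modn_shift_exists l i j : i < l -> j < l -> exists2 a, a < l & j = (a + i) %% l.
Proof.
move=> il jl; exists ((j + l - i) %% l); first by rewrite ltn_pmod //; lia.
by rewrite modnDml (_ : j + l - i + i = j + l) ?modnDr ?modn_small //; lia.
Qed.

Lemma nonconsecutive_offset l i a : i < l -> a < l -> i != (a + i) %% l ->
  (a + i) %% l != i.+1 %% l -> i != ((a + i) %% l).+1 %% l -> 1 < a < l.-1.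
Proof.
move=> il al ij ji1 ij1; have i_shift : i = (0 + i) %% l by rewrite modn_small.
apply/andP; split.
  case: (ltnP 1 a) => // a_le1; have [a0 | a1] : a = 0 \/ a = 1 by lia.
    by move: ij; rewrite a0 -i_shift eqxx.
  by move: ji1; rewrite a1 add1n eqxx.
move: ij1; rewrite -addn1 modnDml addn1 -addSn.
case: (ltnP a l.-1) => // a_ge; rewrite (_ : a.+1 = l); last by lia.
by rewrite modnDl modn_small ?eqxx.
Qed.

Theorem claim2p4 (V : finType) (H : {set {set V}}) (l : nat)
    (v : nat -> V) (e : nat -> {set V}) (u : V) (U : {set V}) (i j : nat) :
  three_graph H ->
  maximal_berge_cycle H l v e ->
  u \notin cycle_vset l v ->
  usable H l v e u U ->
  i < l -> j < l -> i != j -> v i \in U -> v j \in U ->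
  adjacent H (v i) (v j) ->
  EE H (v i) (v j) \subset [set e i; e j].
Proof.
move=> H3 [C Cmax] uC [_ _ U_apart U_avail] il jl ij viU vjU _.
have [l_gt1 _ _ _ _] := C; have l_gt0 : 0 < l by lia.
have [fi [fj [+ + fi_fj]]] := U_avail i j il jl ij viU vjU.
rewrite !inE => /and4P[fi_p fiH u_fi w_fi] /and4P[fj_p fjH u_fj w_fj].
apply/subsetP => f; rewrite !inE => /and3P[fH vif vjf].
apply/negPn/negP; rewrite negb_or => /andP[f_ei f_ej].
have [a al jE] := modn_shift_exists il jl; subst j.
have ji : (a + i) %% l != i by rewrite eq_sym.
have /andP[a_gt1 a_lt] := nonconsecutive_offset il al ij
  (U_apart _ _ il jl ij viU vjU) (U_apart _ _ jl il ji vjU viU).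
pose w k := v ((k + i) %% l); pose p k := e ((k + i) %% l).
have P : berge_path H l w p := berge_cycle_rot i C.
have uP : u \notin cycle_vset l w by rewrite cycle_vset_rot.
have i_wrap : i = (l + i) %% l by rewrite modnDl modn_small.
rewrite {1}i_wrap prevI_shift // in w_fi; rewrite {1}i_wrap prev2I_shift // in fi_p.
rewrite prevI_shift ?(ltnW a_gt1) // in w_fj; rewrite prev2I_shift // in fj_p.
have i_shift : i = (0 + i) %% l by rewrite modn_small.
rewrite {}i_shift in vif f_ei.
have [w' [e' [C' Cv']]] := berge_cycle_switch H3 P uP a_gt1 a_lt fiH u_fi w_fi fi_p
  fjH u_fj w_fj fj_p fH vif vjf f_ei f_ej fi_fj.
apply: (Cmax _ _ _ C'); rewrite Cv' cycle_vset_rot //.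
by apply: properUr; rewrite sub1set.
Qed.
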